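(* If $G$ is a connected graph with girth at least $5$ and maximum degree $\Delta$, then $\chi_D(G)\le \Delta+2$.
   Context: A $k$-coloring of a graph $G$ is a map $\varphi:V(G)\to\{1,\dots,k\}$; it is proper if adjacent vertices get different colors. A coloring $\varphi$ is distinguishing if the only automorphism $f$ of $G$ with $\varphi(f(v))=\varphi(v)$ for all $v$ is the identity. $\chi_D(G)$ is the smallest number of colors in a proper distinguishing coloring of $G$. *)

From mathcomp Require Import all_boot all_fingroup.
Local Open Scope nat_scope.
Set Implicit Arguments. Unset Strict Implicit. Unset Printing Implicit Defensive.

Definition simple_graph (T : finType) (e : rel T) : Prop :=
  symmetric e /\ irreflexive e.

Definition connected (T : finType) (e : rel T) : Prop :=
  forall x y : T, connect e x y.

Definition deg (T : finType) (e : rel T) (v : T) : nat := #|[set w | e v w]|.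
Definition maxdeg (T : finType) (e : rel T) : nat := \max_(v : T) deg e v.

(* Acyclic graphs have infinite girth and satisfy this for all g. *)
Definition girth_ge (T : finType) (e : rel T) (g : nat) : Prop :=
  forall s : seq T, uniq s -> 3 <= size s -> path.cycle e s -> g <= size s.

Definition automorphism (T : finType) (e : rel T) (f : {perm T}) : Prop :=
  forall x y : T, e (f x) (f y) = e x y.

Definition proper_coloring (T : finType) (e : rel T) (k : nat) (phi : T -> 'I_k) : Prop :=
  forall x y : T, e x y -> phi x != phi y.

Definition distinguishing (T : finType) (e : rel T) (k : nat) (phi : T -> 'I_k) : Prop :=
  forall f : {perm T}, automorphism e f -> (forall v, phi (f v) = phi v) -> f = 1%g.

Definition chiD_le (T : finType) (e : rel T) (k : nat) : Prop :=
  exists phi : T -> 'I_k, proper_coloring e phi /\ distinguishing e phi.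

From mathcomp Require Import all_boot all_fingroup zify.
Set Implicit Arguments. Unset Strict Implicit. Unset Printing Implicit Defensive.

(* List the vertices one at a time from a root r, each new vertex adjacent to
   an earlier one, and colour greedily. A vertex must avoid the colour of r,
   the colours of its earlier neighbours, and the colours of its earlier
   rivals: vertices v whose only earlier neighbour u is adjacent to it and is
   also its only neighbour listed before v. A colour-preserving automorphism
   fixing every vertex before x maps x to a later vertex with the same earlier
   neighbours; as girth 5 excludes 4-cycles, x has a single earlier neighbour
   and its image is a rival of x, a contradiction.
   At most Delta + 1 colours are ever forbidden: a vertex with two earlier
   neighbours has no rival, and one with a single earlier neighbour u can only
   have rivals among the other neighbours of u. The first fact needs the order
   to exhaust the unlisted neighbours of a listed parent before anything else,
   which is the invariant [tame]. *)

Lemma connect_exit (T : finType) (e : rel T) (A : pred T) x y :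
  connect e x y -> x \in A -> y \notin A ->
  exists u w, [/\ u \in A, w \notin A & e u w].
Proof.
move=> /connectP[p + ->]; elim: p x => [|z p IH] x /=; first by move=> _ ->.
case/andP=> exz pz xA yA; case: (boolP (z \in A)) => zA; last by exists x, z.
exact: IH pz zA yA.
Qed.

Lemma exists_notin (T : finType) (A : {set T}) : #|A| < #|T| -> exists x, x \notin A.
Proof.
move=> ltA; have : 0 < #|~: A| by rewrite -(ltn_add2l #|A|) addn0 cardsC.
by rewrite card_gt0 => /set0Pn[x]; rewrite inE; exists x.
Qed.

Section GirthFive.

Variables (T : finType) (e : rel T).
Hypotheses (e_sym : symmetric e) (e_irr : irreflexive e) (girth5 : girth_ge e 5).

Lemma edge_neq x y : e x y -> x != y.
Proof. by apply: contraTneq => ->; rewrite e_irr. Qed.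

Lemma no_triangle a b c : e a b -> e b c -> e c a -> False.
Proof.
move=> eab ebc eca; have := @girth5 [:: a; b; c].
rewrite /= !inE !negb_or (edge_neq eab) (edge_neq ebc) (eq_sym a) (edge_neq eca).
by rewrite eab ebc eca => /(_ isT isT isT).
Qed.

Lemma common_nbr_uniq x z u y :
  x != z -> e u x -> e u z -> e y x -> e y z -> y = u.
Proof.
move=> xz eux euz eyx eyz; apply/eqP/negPn/negP => yu.
have := @girth5 [:: u; x; y; z]; rewrite /= !inE !negb_or.
have exy : e x y by rewrite e_sym.
rewrite (edge_neq eux) (eq_sym u) yu (edge_neq euz) (edge_neq exy) xz (edge_neq eyz).
by rewrite eux exy eyz e_sym euz => /(_ isT isT isT).
Qed.

(* A vertex outside s counts as coming after every vertex of s. *)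
Definition before (s : seq T) x y := index x s < index y s.

Definition parent s u v :=
  [&& before s u v, e u v & [forall y, before s y v && e y v ==> (y == u)]].

(* Seen from the vertices before v, z is indistinguishable from v. *)
Definition rival s u v z :=
  [&& parent s u v, e u z & [forall y, before s y v && e y z ==> (y == u)]].

Lemma before_mem s x y : before s x y -> x \in s.
Proof. by rewrite -index_mem => /leq_trans; apply; apply: index_size. Qed.

Lemma parent_mem s u v : parent s u v -> u \in s.
Proof. by case/and3P=> /before_mem. Qed.

Lemma before_rcons s w x y : y \in s -> before (rcons s w) x y = before s x y.
Proof.
rewrite /before -!cats1 !index_cat => ys; rewrite ys.
case: ifP => // /negbT/memNindex ->; have := index_mem y s; rewrite ys; lia.
Qed.

Lemma before_rcons_new s w x : w \notin s -> before (rcons s w) x w = (x \in s).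
Proof.
rewrite /before -!cats1 !index_cat => /negbTE ->; rewrite /= eqxx addn0.
by case: ifP => [|_]; rewrite ?index_mem //; lia.
Qed.

Lemma parent_rcons s w u v : v \in s -> parent (rcons s w) u v = parent s u v.
Proof.
move=> vs; rewrite /parent before_rcons //; congr [&& _, _ & _].
by apply: eq_forallb => y; rewrite before_rcons.
Qed.

Lemma rival_rcons s w u v z : v \in s -> rival (rcons s w) u v z = rival s u v z.
Proof.
move=> vs; rewrite /rival parent_rcons //; congr [&& _, _ & _].
by apply: eq_forallb => y; rewrite before_rcons.
Qed.

Variable r : T.

Record admissible k (s : seq T) (phi : T -> 'I_k) : Prop := Admissible {
  adm_root : r \in s;
  adm_earlier_nbr : forall x, x \in s -> x != r -> exists2 y, before s y x & e y x;
  adm_proper : forall x y, x \in s -> before s y x -> e y x -> phi y != phi x;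
  adm_root_color : forall x, x \in s -> x != r -> phi x != phi r;
  adm_rival : forall u v w, w \in s -> before s v w -> rival s u v w -> phi v != phi w
}.

Section CompleteOrder.

Variables (k : nat) (s : seq T) (phi : T -> 'I_k).
Hypotheses (s_all : forall x, x \in s) (adm : admissible s phi).

Lemma index_all_inj : injective (index ^~ s).
Proof. by move=> x y; apply: (index_inj x); apply: s_all. Qed.

Lemma admissible_proper : proper_coloring e phi.
Proof.
move=> x y exy; have: index x s != index y s.
  by apply: contraNneq (edge_neq exy) => /index_all_inj->.
case: ltngtP => // [xy | yx] _; first exact: (adm_proper adm (s_all y) xy exy).
by rewrite eq_sym; apply: (adm_proper adm (s_all x) yx); rewrite e_sym.
Qed.

Lemma admissible_distinguishing : distinguishing e phi.
Proof.
move=> f f_aut f_phi; apply/permP.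
suff fixed n x : index x s = n -> f x = x by move=> x; rewrite perm1; exact: fixed.
elim/ltn_ind: n x => n IH x ix.
have fix_before y : before s y x -> f y = y.
  by rewrite /before ix => /IH; apply.
apply/eqP/negPn/negP => fxx.
case: (eqVneq x r) => [xr | xr].
  by move: fxx; rewrite xr => /(adm_root_color adm (s_all _)); rewrite f_phi eqxx.
have x_fx : before s x (f x).
  have: index x s != index (f x) s.
    by apply: contraNneq fxx => /index_all_inj <-.
  rewrite /before; case: ltngtP => // fx_x _.
  by have := fix_before _ fx_x => /perm_inj fxx'; rewrite fxx' eqxx in fxx.
have [u ux eux] := adm_earlier_nbr adm (s_all x) xr.
have nbr_fx y : before s y x -> e y (f x) = e y x.
  by move=> /fix_before {1}<-; rewrite f_aut.
have sole_nbr y : before s y x -> e y x -> y = u.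
  move=> yx eyx.
  by apply: (common_nbr_uniq (x := x) (z := f x)); rewrite ?nbr_fx // eq_sym.
have : rival s u x (f x).
  rewrite /rival /parent ux eux nbr_fx // eux /=.
  by apply/andP; split; apply/forallP => y; apply/implyP => /andP[yx];
    rewrite ?nbr_fx // => /(sole_nbr _ yx)->.
by move/(adm_rival adm (s_all _) x_fx); rewrite f_phi eqxx.
Qed.

End CompleteOrder.

Definition forbidden k (s : seq T) (phi : T -> 'I_k) w : {set 'I_k} :=
  phi r |: [set phi y | y in [set y in s | e y w]]
        :|: [set phi v | v in [set v in s | [exists u, rival s u v w]]].

Lemma admissible_rcons k s (phi : T -> 'I_k) w c :
  admissible s phi -> w \notin s -> (exists2 y, y \in s & e y w) ->
  c \notin forbidden s phi w ->
  admissible (rcons s w) (fun x => if x == w then c else phi x).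
Proof.
move=> adm ws [y0 y0s ey0w]; rewrite !inE !negb_or => /andP[/andP[cr c_nbr] c_rival].
have neq_w x : x \in s -> x != w by apply: contraTneq => ->.
have old_color x : x \in s -> (if x == w then c else phi x) = phi x.
  by move=> /neq_w/negbTE->.
have earlier_mem x y : (x == w) || (x \in s) -> before (rcons s w) y x -> y \in s.
  case/orP=> [/eqP-> | xs]; first by rewrite before_rcons_new.
  by rewrite before_rcons // => /before_mem.
have r_s := adm_root adm.
split=> [|x|x y|x|u v x]; rewrite ?mem_rcons ?inE ?r_s ?orbT //.
- case/orP=> [/eqP-> _ | xs xr]; first by exists y0; rewrite ?before_rcons_new.
  by have [y yx eyx] := adm_earlier_nbr adm xs xr; exists y; rewrite ?before_rcons.
- move=> xin yx eyx; have ys := earlier_mem _ _ xin yx; rewrite old_color //.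
  case/orP: xin => [/eqP xw | xs].
    rewrite xw eqxx; apply: contraNneq c_nbr => <-.
    by apply: imset_f; rewrite inE ys -xw.
  rewrite before_rcons // in yx.
  by rewrite old_color // (adm_proper adm xs yx eyx).
- rewrite (old_color _ r_s) => /orP[/eqP-> _ | xs xr]; first by rewrite eqxx.
  by rewrite old_color // (adm_root_color adm xs xr).
- move=> xin vx; have vs := earlier_mem _ _ xin vx; rewrite rival_rcons // old_color //.
  case/orP: xin => [/eqP-> riv | xs riv]; last first.
    rewrite before_rcons // in vx.
    by rewrite old_color // (adm_rival adm xs vx riv).
  rewrite eqxx; apply: contraNneq c_rival => <-.
  by apply: imset_f; rewrite inE vs; apply/existsP; exists u.
Qed.

Definition active s u :=
  [&& u \in s, [exists v, (v \in s) && parent s u v] & [exists z, (z \notin s) && e u z]].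

Record tame s : Prop := Tame {
  tame_active_uniq : forall u1 u2, active s u1 -> active s u2 -> u1 = u2;
  tame_active_sole : forall u z y,
    active s u -> z \notin s -> e u z -> y \in s -> e y z -> y = u
}.

Lemma rival_sole_nbr s u v w y :
  tame s -> v \in s -> w \notin s -> rival s u v w -> y \in s -> e y w -> y = u.
Proof.
move=> ts vs ws /and3P[puv euw _]; apply: (tame_active_sole ts) => //.
apply/and3P; split; first exact: parent_mem puv.
  by apply/existsP; exists v; rewrite vs.
by apply/existsP; exists w; rewrite ws.
Qed.

Lemma active_rcons s w u : w \notin s -> active (rcons s w) u ->
  active s u \/ [/\ u \in s, e u w & forall y, y \in s -> e y w -> y = u].
Proof.
move=> ws /and3P[_ /existsP[v /andP[vin puv]] /existsP[z /andP[zout euz]]].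
move: zout; rewrite mem_rcons inE negb_or => /andP[_ zs].
move: vin; rewrite mem_rcons inE => /orP[/eqP vw | vs].
  right; move: puv; rewrite /parent vw before_rcons_new // => /and3P[us euw /forallP sole].
  split=> // y ys eyw; apply/eqP.
  by move: (sole y); rewrite before_rcons_new // ys eyw.
rewrite parent_rcons // in puv; left; apply/and3P; split; first exact: parent_mem puv.
  by apply/existsP; exists v; rewrite vs.
by apply/existsP; exists z; rewrite zs.
Qed.

Lemma tame_rcons_sole s w u0 :
  w \notin s -> e u0 w -> (forall y, y \in s -> e y w -> y = u0) ->
  (forall u, active s u -> u = u0) ->
  (forall z y, z \notin s -> e u0 z -> y \in s -> e y z -> y = u0) ->
  tame (rcons s w).
Proof.
move=> ws eu0w sole_w act_u0 sole_u0.
have act u : active (rcons s w) u -> u = u0.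
  by case/(active_rcons ws) => [/act_u0 // | [us euw _]]; apply: sole_w.
split=> [u1 u2 /act-> /act-> // | u z y /act->].
rewrite !mem_rcons !inE negb_or => /andP[_ zs] eu0z /orP[/eqP-> ewz | ys eyz].
  by case: (no_triangle eu0w ewz); rewrite e_sym.
exact: sole_u0 zs eu0z ys eyz.
Qed.

Lemma tame_rcons_two s w y1 y2 :
  w \notin s -> (forall u, ~~ active s u) ->
  y1 != y2 -> y1 \in s -> y2 \in s -> e y1 w -> e y2 w -> tame (rcons s w).
Proof.
move=> ws no_act y12 y1s y2s e1 e2.
have no_act' u : ~~ active (rcons s w) u.
  apply/negP => /(active_rcons ws) [|[_ _ sole]]; first by apply/negP.
  by move: y12; rewrite (sole _ y1s e1) (sole _ y2s e2) eqxx.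
by split=> [u1 u2 | u z y]; rewrite (negbTE (no_act' _)).
Qed.

Lemma deg_le_maxdeg v : deg e v <= maxdeg e.
Proof. exact: (leq_bigmax (F := deg e) v). Qed.

Lemma card_forbidden k s (phi : T -> 'I_k) w u0 :
  tame s -> w \notin s -> u0 \in s -> e u0 w -> #|forbidden s phi w| <= maxdeg e + 1.
Proof.
move=> ts ws u0s eu0w.
have neq_w v : v \in s -> v != w by apply: contraTneq => ->.
case: (boolP [exists y, [&& y \in s, e y w & y != u0]]) => [|/existsPn sole].
  case/existsP=> y /and3P[ys eyw yu0]; rewrite /forbidden.
  have -> : [set v in s | [exists u, rival s u v w]] = set0.
    apply/setP => v; rewrite !inE; apply/negbTE/andP => [[vs /existsP[u riv]]].
    have sole := rival_sole_nbr ts vs ws riv.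
    by move: yu0; rewrite (sole _ ys eyw) (sole _ u0s eu0w) eqxx.
  rewrite imset0 setU0 cardsU1 addnC leq_add ?leq_b1 //.
  apply: leq_trans (leq_imset_card _ _) (leq_trans _ (deg_le_maxdeg w)).
  by apply: subset_leq_card; apply/subsetP => x; rewrite !inE e_sym => /andP[].
have sole_w y : y \in s -> e y w -> y = u0.
  by move=> ys eyw; apply/eqP; move: (sole y); rewrite ys eyw /= negbK.
have sub : forbidden s phi w \subset
    phi r |: (phi u0 |: [set phi v | v in [set v | e u0 v] :\ w]).
  apply/subsetP => c; rewrite !inE => /orP[/orP[-> // | /imsetP[y]] | /imsetP[v]].
    by rewrite inE => /andP[ys /(sole_w _ ys)->] ->; rewrite eqxx orbT.
  rewrite inE => /andP[vs /existsP[u /and3P[puv euw _]]] ->.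
  have uu0 := sole_w _ (parent_mem puv) euw.
  move: puv; rewrite uu0 => /and3P[_ eu0v _].
  by rewrite imset_f ?orbT // !inE neq_w.
have := deg_le_maxdeg u0; rewrite /deg (cardsD1 w) inE eu0w add1n => deg_u0.
apply: leq_trans (subset_leq_card sub) _; rewrite !cardsU1.
apply: leq_trans (leq_add (leq_b1 _) (leq_add (leq_b1 _) (leq_imset_card _ _))) _.
by rewrite addnC leq_add2r.
Qed.

Hypothesis e_conn : connected e.

Lemma exists_tame_rcons s x z : tame s -> x \in s -> z \notin s ->
  exists w u, [/\ w \notin s, u \in s, e u w & tame (rcons s w)].
Proof.
move=> ts xs zs; have [u act | no_act] := pickP (active s).
  have /and3P[us _ /existsP[w /andP[ws euw]]] := act.
  exists w, u; split=> //; apply: (tame_rcons_sole ws euw).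
  - by move=> y ys eyw; apply: (tame_active_sole ts act ws euw ys eyw).
  - by move=> u' act'; apply: (tame_active_uniq ts act' act).
  - by move=> z' y zs' euz' ys eyz'; apply: (tame_active_sole ts act zs' euz' ys eyz').
have no_act' u : ~~ active s u by rewrite no_act.
pose two_nbrs w := [exists y1, exists y2, [&& y1 \in s, y2 \in s, y1 != y2, e y1 w & e y2 w]].
have [w /andP[ws two] | one_nbr] := pickP (fun w => (w \notin s) && two_nbrs w).
  case/existsP: two => y1 /existsP[y2 /and5P[y1s y2s y12 e1 e2]].
  by exists w, y1; split=> //; apply: (tame_rcons_two ws no_act' y12 y1s y2s e1 e2).
have sole z' y1 y2 : z' \notin s -> y1 \in s -> y2 \in s -> e y1 z' -> e y2 z' -> y1 = y2.
  move=> zs' y1s y2s e1 e2; apply/eqP/negPn/negP => y12.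
  suff : (z' \notin s) && two_nbrs z' by rewrite one_nbr.
  by rewrite zs'; apply/existsP; exists y1; apply/existsP; exists y2; apply/and5P.
have [u [w [us ws euw]]] := connect_exit (e_conn x z) xs zs.
exists w, u; split=> //; apply: (tame_rcons_sole ws euw).
- by move=> y ys eyw; apply: (sole _ _ _ ws ys us eyw euw).
- by move=> u'; rewrite (negbTE (no_act' u')).
- by move=> z' y zs' euz' ys eyz'; apply: (sole _ _ _ zs' ys us eyz' euz').
Qed.

Lemma admissible_step s (phi : T -> 'I_(maxdeg e + 2)) z :
  admissible s phi -> tame s -> z \notin s ->
  exists w (phi' : T -> 'I_(maxdeg e + 2)),
    [/\ w \notin s, admissible (rcons s w) phi' & tame (rcons s w)].
Proof.
move=> adm ts zs; have [w [u [ws us euw tw]]] := exists_tame_rcons ts (adm_root adm) zs.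
have [c cF] : exists c, c \notin forbidden s phi w.
  apply: exists_notin; rewrite card_ord.
  by apply: leq_ltn_trans (card_forbidden phi ts ws us euw) _; rewrite ltn_add2l.
exists w, (fun x => if x == w then c else phi x); split=> //.
by apply: admissible_rcons => //; exists u.
Qed.

Lemma exists_admissible_order :
  exists s (phi : T -> 'I_(maxdeg e + 2)), (forall x, x \in s) /\ admissible s phi.
Proof.
pose c0 : 'I_(maxdeg e + 2) := Ordinal (ltn_addl (maxdeg e) (isT : 0 < 2)).
suff grow n s (phi : T -> 'I_(maxdeg e + 2)) :
    #|[predC s]| <= n -> admissible s phi -> tame s ->
    exists s' (phi' : T -> 'I_(maxdeg e + 2)), (forall x, x \in s') /\ admissible s' phi'.
  have not_before_r y : before [:: r] y r = false by rewrite /before index_head.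
  apply: (grow #|T| [:: r] (fun=> c0)); first exact: max_card.
    split=> [|x|x y|x|u v x]; rewrite ?mem_head // inE => /eqP->;
      by rewrite ?eqxx ?not_before_r.
  have no_act u : ~~ active [:: r] u.
    apply/negP => /and3P[_ /existsP[v /andP[]]].
    by rewrite inE => /eqP-> /and3P[]; rewrite not_before_r.
  by split=> [u1 u2 | u z y]; rewrite (negbTE (no_act _)).
elim: n s phi => [|n IH] s phi out_s adm ts.
  exists s, phi; split=> // x; apply/negPn/negP => xs.
  by move: out_s; rewrite leqn0 => /eqP/card0_eq/(_ x); rewrite !inE xs.
have [z zs | s_all] := pickP [predC s]; last first.
  by exists s, phi; split=> // x; move: (s_all x); rewrite inE => /negbFE.
have [w [phi' [ws adm' ts']]] := admissible_step adm ts zs.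
apply: IH adm' ts'; rewrite -ltnS; apply: leq_trans out_s; apply: proper_card.
apply/properP; split; last by exists w; rewrite !inE // mem_rcons mem_head.
by apply/subsetP => y; rewrite !inE mem_rcons inE negb_or => /andP[].
Qed.

End GirthFive.

Theorem proposition3 (T : finType) (e : rel T) :
  simple_graph e -> connected e -> girth_ge e 5 ->
  chiD_le e (maxdeg e + 2).
Proof.
move=> [e_sym e_irr] e_conn girth5.
have [r _ | no_vertex] := pickP (@predT T).
  have [s [phi [s_all adm]]] := exists_admissible_order e_sym e_irr girth5 r e_conn.
  by exists phi; split; [apply: admissible_proper adm | apply: admissible_distinguishing adm].
exists (fun=> Ordinal (ltn_addl (maxdeg e) (isT : 0 < 2))).
split=> [x | f _ _]; first by have := no_vertex x.
by apply/permP => x; have := no_vertex x.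
Qed.
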